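(* For all integers $n\ge 3$ and $1<k<n$, the vertex connectivity of $G=H_B(n,k)$ is $\kappa(G)=1$.
   Context: Fix integers $n\ge 2$ and $1\le k<n$ and positive real numbers $x_1<x_2<\dots<x_n$. Let $\mathscr{B}_n=\{\pm x_1,\pm x_2,\dots,\pm x_{n-1},x_n\}$ (so $-x_n\notin\mathscr{B}_n$). Let $\phi(\mathscr{B}_n)$ be the family of all nonempty subsets $S\subseteq\mathscr{B}_n$ whose elements have pairwise distinct absolute values and whose element of largest absolute value is positive. Let $\mathscr{B}_n^+=\{x_1,\dots,x_n\}$, let $V_1$ be the set of all $k$-element subsets of $\mathscr{B}_n^+$, and let $V_2=\phi(\mathscr{B}_n)\setminus V_1$. For $A\in\phi(\mathscr{B}_n)$ put $A^\dagger=\{|a|:a\in A\}$. The bipartite Kneser B type-$k$ graph $H_B(n,k)$ is the simple graph with vertex set $V_1\cup V_2$ in which $X\in V_1$ and $Y\in V_2$ are adjacent if and only if $X\subseteq Y^\dagger$ or $Y^\dagger\subseteq X$, and there are no other edges. *)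

From mathcomp Require Import all_boot.
Set Implicit Arguments. Unset Strict Implicit. Unset Printing Implicit Defensive.

(* A graph is given by a vertex set V inside a finType T and an adjacency
   relation e (only used between vertices of V). *)
Section Graph.
Variable T : finType.

Definition induced_rel (e : rel T) (W : {set T}) : rel T :=
  [rel u v | [&& u \in W, v \in W & e u v]].

Definition connected_on (e : rel T) (W : {set T}) : bool :=
  [forall u in W, forall v in W, connect (induced_rel e W) u v].

(* S is a "separating" set of G = (V, e): G - S is disconnected or has at most
   one vertex (standard convention, so that kappa(K_m) = m - 1). *)
Definition separates (V : {set T}) (e : rel T) (S : {set T}) : bool :=
  (S \subset V) && ~~ ((1 < #|V :\: S|) && connected_on e (V :\: S)).

(* vertex connectivity kappa(G): minimum size of a separating set
   (S = V is always separating, so the minimum is over a nonempty family). *)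
Definition vertex_connectivity (V : {set T}) (e : rel T) : nat :=
  \big[minn/#|V|]_(S : {set T} | separates V e S) #|S|.
End Graph.

(* The real number +x_{i+1} is encoded as (i, true) and -x_{i+1} as
   (i, false), for i : 'I_n (0-indexed).  Absolute value |a| corresponds to
   the index a.1 (x_1 < ... < x_n, so the order on indices is the order on
   absolute values). *)
Section HB.
Variables n k : nat.
Notation elt := ('I_n * bool)%type.

Definition Bn : {set elt} := [set a : elt | a.2 || (a.1 < n.-1)].

Definition dagger (A : {set elt}) : {set 'I_n} := [set a.1 | a in A].

Definition inPhi (S : {set elt}) : bool :=
  [&& S != set0, S \subset Bn,
      #|dagger S| == #|S|
    & [forall a in S, [forall b in S, b.1 <= a.1] ==> a.2]].

Definition Bplus : {set elt} := [set a : elt | a.2].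

Definition inV1 (S : {set elt}) : bool := (S \subset Bplus) && (#|S| == k).

Definition inV2 (S : {set elt}) : bool := inPhi S && ~~ inV1 S.

Definition HB_vertices : {set {set elt}} := [set S | inPhi S].

(* X in V1, Y in V2 adjacent iff X subset Y^dagger or Y^dagger subset X
   (X consists of positive elements, so X is identified with dagger X) *)
Definition HB_edge1 (X Y : {set elt}) : bool :=
  [&& inV1 X, inV2 Y & (dagger X \subset dagger Y) || (dagger Y \subset dagger X)].

Definition HB_adj : rel {set elt} :=
  [rel X Y | HB_edge1 X Y || HB_edge1 Y X].
End HB.

Arguments Bn : clear implicits.
Arguments dagger {n}.
Arguments inPhi : clear implicits.
Arguments Bplus : clear implicits.
Arguments inV1 : clear implicits.
Arguments inV2 : clear implicits.
Arguments HB_vertices : clear implicits.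
Arguments HB_edge1 : clear implicits.
Arguments HB_adj : clear implicits.

From mathcomp Require Import all_boot all_order.
Import Order.TTheory.

Set Implicit Arguments.
Unset Strict Implicit.
Unset Printing Implicit Defensive.

(* H_B(n, k) is connected: B_n^+ lies in V2 (as k < n) and is adjacent to every
   k-subset of B_n^+, and every Y in V2 is adjacent to a k-subset of B_n^+
   comparable with Y^dagger, so every vertex is within distance 2 of B_n^+.
   Removing X = {x_1, ..., x_k} disconnects it: Y = {-x_1, x_2, ..., x_k} lies in
   V2 (its largest element x_k is positive because k > 1), and a k-subset of
   B_n^+ comparable with the k-set Y^dagger must equal it, i.e. must be X. *)

Lemma exists_subset_card (T : finType) (A : {set T}) k :
  k <= #|A| -> exists2 B : {set T}, B \subset A & #|B| = k.
Proof.
case/card_geqP=> s [s_uniq s_size sA]; exists [set x in s].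
  by apply/subsetP=> x; rewrite inE => /sA.
by rewrite cardsE (card_uniqP s_uniq).
Qed.

Lemma exists_comparable_card (T : finType) (D : {set T}) k : k <= #|T| ->
  exists2 I : {set T}, #|I| = k & (I \subset D) || (D \subset I).
Proof.
move=> k_le_T; have [k_le_D | D_lt_k] := leqP k #|D|.
  by have [B BD cardB] := @exists_subset_card _ D k k_le_D; exists B; rewrite ?BD.
have [|B BDc cardB] := @exists_subset_card _ (~: D) (k - #|D|).
  by rewrite leq_subLR cardsC.
exists (D :|: B); last by rewrite subsetUl orbT.
have DB0 : D :&: B = set0.
  by apply/setP=> x; rewrite !inE; apply/andP=> -[xD /(subsetP BDc)]; rewrite inE xD.
by rewrite cardsU DB0 cards0 subn0 cardB subnKC // ltnW.
Qed.

Section VertexConnectivity.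
Variables (T : finType) (V : {set T}) (e : rel T).

Lemma vertex_connectivity_le (S : {set T}) :
  separates V e S -> vertex_connectivity V e <= #|S|.
Proof.
move=> sepS; rewrite /vertex_connectivity -minEnat.
exact: (bigmin_le_cond #|V| (fun S : {set T} => #|S|) sepS).
Qed.

Lemma vertex_connectivity_gt0 :
  1 < #|V| -> connected_on e V -> 0 < vertex_connectivity V e.
Proof.
move=> V_gt1 connV; apply: (big_ind (fun m => 0 < m)) => [|a b|S sepS].
- exact: ltnW.
- by rewrite leq_min => ->.
rewrite card_gt0; apply: contraTneq sepS => ->.
by rewrite /separates sub0set setD0 V_gt1 connV.
Qed.

Lemma induced_rel_sym (W : {set T}) : symmetric e -> symmetric (induced_rel e W).
Proof. by move=> e_sym u v; rewrite /induced_rel /= andbCA e_sym. Qed.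

Lemma connected_on_hub (W : {set T}) c : symmetric e ->
  (forall u, u \in W -> connect (induced_rel e W) u c) -> connected_on e W.
Proof.
move=> e_sym to_c; apply/forall_inP=> u uW; apply/forall_inP=> v vW.
apply: connect_trans (to_c u uW) _.
by rewrite (sym_connect_sym (induced_rel_sym W e_sym)) to_c.
Qed.

Lemma separates_isolated (S : {set T}) y z : S \subset V ->
  y \in V :\: S -> z \in V :\: S -> y != z ->
  (forall w, ~~ induced_rel e (V :\: S) y w) -> separates V e S.
Proof.
move=> SV yW zW yz y_isolated; rewrite /separates SV /=.
apply/nandP; right; apply/forall_inP=> /(_ y yW)/forall_inP/(_ z zW).
case/connectP=> [[|w p]] /=; first by move=> _ zy; rewrite zy eqxx in yz.
by rewrite (negbTE (y_isolated w)).
Qed.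

Lemma vertex_connectivity_cut_vertex x : 1 < #|V| -> connected_on e V ->
  separates V e [set x] -> vertex_connectivity V e = 1.
Proof.
move=> V_gt1 connV sepx; apply/eqP; rewrite eqn_leq.
by rewrite -{1}(cards1 x) vertex_connectivity_le // vertex_connectivity_gt0.
Qed.

End VertexConnectivity.

Section PositiveSets.
Variable n : nat.
Notation elt := ('I_n * bool)%type.
Implicit Types (I : {set 'I_n}) (X Y : {set elt}).

Definition pos (I : {set 'I_n}) : {set elt} := [set (i, true) | i in I].

Lemma mem_pos I i b : ((i, b) \in pos I) = b && (i \in I).
Proof.
apply/imsetP/andP => [[j jI [-> ->]] // | [-> iI]].
by exists i.
Qed.

Lemma card_pos I : #|pos I| = #|I|.
Proof. by rewrite card_imset // => i j [->]. Qed.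

Lemma dagger_pos I : dagger (pos I) = I.
Proof.
apply/setP=> i; apply/imsetP/idP => [[[j b]] | iI].
  by rewrite mem_pos => /andP[_ jI] ->.
by exists (i, true); rewrite ?mem_pos.
Qed.

Lemma inPhi_pos I : I != set0 -> inPhi n (pos I).
Proof.
case/set0Pn=> i iI; apply/and4P; split.
- by apply/set0Pn; exists (i, true); rewrite mem_pos.
- by apply/subsetP=> -[j b]; rewrite mem_pos inE => /andP[-> _].
- by rewrite dagger_pos card_pos.
- by apply/forall_inP=> -[j b]; rewrite mem_pos => /andP[-> _]; rewrite implybT.
Qed.

Lemma pos_dagger X : X \subset Bplus n -> pos (dagger X) = X.
Proof.
move=> /subsetP XB; apply/setP=> -[i b]; rewrite mem_pos.
apply/andP/idP => [[-> /imsetP[[j c] jX /= ->]] | iX].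
  by move: (XB _ jX); rewrite inE /= => c_true; rewrite c_true in jX.
by move: (XB _ iX); rewrite inE /= => ->; split=> //; apply/imsetP; exists (i, b).
Qed.

Variable k : nat.

Lemma pos_subset_Bplus I : pos I \subset Bplus n.
Proof. by apply/subsetP=> -[i b]; rewrite mem_pos inE => /andP[]. Qed.

Lemma inV1_pos I : #|I| = k -> inV1 n k (pos I).
Proof. by move=> cardI; rewrite /inV1 card_pos cardI eqxx pos_subset_Bplus. Qed.

Lemma inV2_vertex Y : inV2 n k Y -> Y \in HB_vertices n.
Proof. by rewrite inE => /andP[]. Qed.

Lemma HB_adj_pos I Y : #|I| = k -> inV2 n k Y ->
  (I \subset dagger Y) || (dagger Y \subset I) -> HB_adj n k (pos I) Y.
Proof.
move=> cardI Y2 IY; apply/orP; left.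
by rewrite /HB_edge1 inV1_pos // Y2 dagger_pos IY.
Qed.

Lemma inV1_comparable X I : inV1 n k X -> #|I| = k ->
  (dagger X \subset I) || (I \subset dagger X) -> X = pos I.
Proof.
case/andP=> XB /eqP cardX cardI.
have cardXI : #|dagger X| = #|I| by rewrite -card_pos pos_dagger // cardX cardI.
case/orP=> [/(subset_cardP cardXI)/setP | /(subset_cardP (esym cardXI))/setP] eqXI.
  by rewrite -(pos_dagger XB) eqXI.
by rewrite -(pos_dagger XB) -eqXI.
Qed.

End PositiveSets.

Section CutVertex.
Variables n k : nat.
Hypotheses (k_gt1 : 1 < k) (k_lt_n : k < n).
Notation elt := ('I_n * bool)%type.
Notation V := (HB_vertices n).
Notation e := (HB_adj n k).

Lemma HB_adj_sym : symmetric e.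
Proof. by move=> X Y; rewrite /HB_adj /= orbC. Qed.

Lemma Bplus_posT : Bplus n = pos [set: 'I_n].
Proof. by apply/setP=> -[i b]; rewrite mem_pos !inE andbT. Qed.

Lemma Bplus_inV2 : inV2 n k (Bplus n).
Proof.
have i0 : 'I_n := Ordinal k_lt_n.
rewrite /inV2 Bplus_posT inPhi_pos; last by apply/set0Pn; exists i0.
by rewrite /inV1 card_pos cardsT card_ord (gtn_eqF k_lt_n) andbF.
Qed.

Lemma connect_Bplus u : u \in V -> connect (induced_rel e V) u (Bplus n).
Proof.
have BV := inV2_vertex Bplus_inV2.
move=> uV; have [u1 | u2] := boolP (inV1 n k u).
  apply: connect1; rewrite /induced_rel /= uV BV; apply/orP; left.
  by rewrite /HB_edge1 u1 Bplus_inV2 Bplus_posT dagger_pos subsetT.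
have {}u2 : inV2 n k u by rewrite /inV2 u2 andbT; rewrite inE in uV.
have [|I cardI Iu] := @exists_comparable_card _ (dagger u) k.
  by rewrite card_ord ltnW.
have IV : pos I \in V.
  by rewrite inE inPhi_pos // -card_gt0 cardI ltnW.
apply: (@connect_trans _ _ (pos I)); apply: connect1.
  rewrite /induced_rel /= IV uV /=.
  by rewrite HB_adj_sym HB_adj_pos.
rewrite /induced_rel /= IV BV /=.
by apply: HB_adj_pos cardI Bplus_inV2 _; rewrite Bplus_posT dagger_pos subsetT.
Qed.

Definition below_k : {set 'I_n} := [set i : 'I_n | i < k].

Definition X0 : {set elt} := pos below_k.

(* {-x_1, x_2, ..., x_k}: only the element of index 0 is negative. *)
Definition Y0 : {set elt} := [set a : elt | (a.1 < k) && (a.2 == (0 < a.1))].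

Lemma card_below_k : #|below_k| = k.
Proof.
have -> : below_k = [set widen_ord (ltnW k_lt_n) j | j : 'I_k].
  apply/setP=> i; rewrite inE; apply/idP/imsetP => [i_lt_k | [j _ ->]].
    by exists (Ordinal i_lt_k) => //; apply: val_inj.
  exact: (ltn_ord j).
by rewrite card_imset ?card_ord // => i j /(congr1 val) /= /val_inj.
Qed.

Lemma X0_inV : X0 \in V.
Proof. by rewrite inE inPhi_pos // -card_gt0 card_below_k ltnW. Qed.

Lemma dagger_Y0 : dagger Y0 = below_k.
Proof.
apply/setP=> i; rewrite inE; apply/imsetP/idP => [[a] | i_lt_k].
  by rewrite inE => /andP[a_lt_k _] ->.
by exists (i, 0 < i); rewrite // inE /= i_lt_k eqxx.
Qed.

Lemma Y0_not_positive : ~~ (Y0 \subset Bplus n).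
Proof.
pose zero : 'I_n := Ordinal (ltn_trans (ltnW k_gt1) k_lt_n).
apply/subsetPn; exists (zero, false); last by rewrite inE.
by rewrite inE /= ltnW.
Qed.

Lemma Y0_inV2 : inV2 n k Y0.
Proof.
pose top : 'I_n := Ordinal (leq_ltn_trans (leq_pred k) k_lt_n).
have topY0 : (top, true) \in Y0.
  by rewrite inE /= ltn_predL ltn_predRL k_gt1 (ltnW k_gt1).
apply/andP; split; last by rewrite /inV1 negb_and Y0_not_positive.
apply/and4P; split.
- by apply: contraNneq Y0_not_positive => ->; exact: sub0set.
- apply/subsetP=> -[i []]; rewrite !inE //= => /andP[_]; case: posnP => // -> _.
  by rewrite ltn_predRL (ltn_trans k_gt1 k_lt_n).
- rewrite /dagger card_in_imset // => -[i b] [j c]; rewrite !inE /=.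
  by move=> /andP[_ /eqP->] /andP[_ /eqP->] ->.
apply/forall_inP=> -[i b]; rewrite inE /= => /andP[_ /eqP->].
apply/implyP=> /forall_inP/(_ _ topY0) /= top_le_i.
by rewrite (leq_trans _ top_le_i) // ltn_predRL.
Qed.

Lemma Y0_isolated Z : ~~ induced_rel e (V :\ X0) Y0 Z.
Proof.
apply/negP=> /and3P[_ ZV /orP[/and3P[Y0_V1 _ _] | /and3P[Z1 _ cmp]]].
  by case/andP: Y0_inV2 => _; rewrite Y0_V1.
rewrite dagger_Y0 in cmp.
by move: ZV; rewrite (inV1_comparable Z1 card_below_k cmp) setD11.
Qed.

Lemma X0_cut_vertex : separates V e [set X0].
Proof.
have X0_V1 : inV1 n k X0 := inV1_pos card_below_k.
have BX0 : Bplus n != X0.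
  by apply: contraTneq Bplus_inV2 => ->; rewrite /inV2 X0_V1 andbF.
apply: (@separates_isolated _ _ _ _ Y0 (Bplus n)).
- by rewrite sub1set X0_inV.
- rewrite in_setD1 (inV2_vertex Y0_inV2) andbT.
  by apply: contraNneq Y0_not_positive => ->; exact: pos_subset_Bplus.
- by rewrite in_setD1 (inV2_vertex Bplus_inV2) BX0.
- by apply: contraNneq Y0_not_positive => ->.
- exact: Y0_isolated.
Qed.

Lemma HB_connected : connected_on e V.
Proof. exact: connected_on_hub HB_adj_sym connect_Bplus. Qed.

Lemma HB_vertices_gt1 : 1 < #|V|.
Proof.
apply/card_gt1P; exists X0, Y0; rewrite X0_inV (inV2_vertex Y0_inV2).
by split=> //; apply: contraNneq Y0_not_positive => <-; exact: pos_subset_Bplus.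
Qed.

End CutVertex.

Theorem mainTheorem6 (n k : nat) :
  3 <= n -> 1 < k < n ->
  vertex_connectivity (HB_vertices n) (HB_adj n k) = 1.
Proof.
(* [3 <= n] is implied by [1 < k < n]. *)
move=> _ /andP[k_gt1 k_lt_n].
apply: (vertex_connectivity_cut_vertex (HB_vertices_gt1 k_gt1 k_lt_n)).
  exact: HB_connected.
exact: X0_cut_vertex.
Qed.
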